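(* Let $X$ and $Y$ be compact metric spaces, with $d$ the metric on $X$. Let $\phi:\mathrm{C}(X)\to \mathrm{M}_n(\mathrm{C}(Y))$ be the diagonal $*$-homomorphism $\phi(f)=\mathrm{diag}(f\circ\lambda_1,\dots,f\circ\lambda_n)$ determined by continuous maps $\lambda_1,\dots,\lambda_n:Y\to X$. Let $x_0\in X$, $f\in \mathrm{C}(X)$ and $\epsilon>0$, and let $\eta>0$ be such that $|f(x)-f(y)|<\epsilon$ whenever $d(x,y)<2\eta$. Suppose $F_1,\dots,F_m$ ($m\le n$) are nonempty closed subsets of $Y$ such that $d(\lambda_i(y),x_0)<\eta$ whenever $y\in F_i$. Then there exist a unitary $u\in \mathrm{M}_m(\mathrm{C}(Y))\oplus 1_{n-m}$ and an element $b\in \mathrm{M}_{m-1}(\mathrm{C}(Y))$ such that for every $y\in\bigcup_{i=1}^m F_i$, \[ \big\| u(y)\phi(f)(y)u^*(y)-\mathrm{diag}\big(f(x_0),\,b(y),\,f(\lambda_{m+1}(y)),\dots,f(\lambda_n(y))\big)\big\|<2\epsilon \] (if $m=1$ there is no $b$ block).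
   Context: $\mathrm{M}_m(\mathrm{C}(Y))\oplus 1_{n-m}$ denotes the set of $n\times n$ matrices of the form $\begin{pmatrix} a&0\\0&1_{n-m}\end{pmatrix}$ with $a\in\mathrm{M}_m(\mathrm{C}(Y))$. *)

From HB Require Import structures.
From mathcomp Require Import all_boot all_order all_algebra.
From mathcomp Require Import all_classical all_reals all_analysis.
From mathcomp.real_closed Require Export complex.
Import Order.TTheory GRing.Theory Num.Theory.
Import numFieldTopology.Exports numFieldNormedType.Exports.
Set Implicit Arguments. Unset Strict Implicit. Unset Printing Implicit Defensive.
Local Open Scope ring_scope.
Local Open Scope complex_scope.

(* The complex numbers over the real numbers R, seen as a numClosedFieldType
   (this is the structure that carries MathComp-Analysis's topology). *)
Definition Cplx (R : realType) : numClosedFieldType := R[i].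

Definition cmod (R : realType) (z : Cplx R) : R :=
  let: a +i* b := z in Num.sqrt (a ^+ 2 + b ^+ 2).

Definition cvec_norm (R : realType) n (v : 'cV[Cplx R]_n) : R :=
  Num.sqrt (\sum_(i < n) cmod (v i 0) ^+ 2).

(* operator norm of a matrix on (C^n, l^2): this is the C*-norm of M_n(C) *)
Definition cmx_opnorm (R : realType) n (A : 'M[Cplx R]_n) : R :=
  sup [set cvec_norm (A *m v) | v in [set v : 'cV[Cplx R]_n | cvec_norm v <= 1]].

Definition ctrmx (R : realType) n (A : 'M[Cplx R]_n) : 'M[Cplx R]_n :=
  map_mx Num.conj A^T.

Definition unitary_cmx (R : realType) n (U : 'M[Cplx R]_n) : Prop :=
  U *m ctrmx U = 1%:M /\ ctrmx U *m U = 1%:M.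

Definition diag_starhom (R : realType) (X Y : Type) n (lam : 'I_n -> Y -> X)
  (f : X -> Cplx R) (y : Y) : 'M[Cplx R]_n :=
  diag_mx (\row_i f (lam i y)).

From HB Require Import structures.
From mathcomp Require Import all_boot all_order all_algebra.
From mathcomp Require Import all_classical all_reals all_analysis.
From mathcomp.real_closed Require Import complex.
From mathcomp Require Import lra ring.
Import Order.TTheory GRing.Theory Num.Theory.
Import numFieldTopology.Exports numFieldNormedType.Exports.
Set Implicit Arguments.
Unset Strict Implicit.
Unset Printing Implicit Defensive.
Local Open Scope classical_set_scope.
Local Open Scope ring_scope.
Local Open Scope complex_scope.

(* Choose continuous weights v_l >= 0 with sum_l v_l^2 = 1 such that, whenever y
   lies in some F_i, v_l(y) vanishes unless d(lam_l y, x0) < 2 eta.  The Householder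
   reflection a(y) = 1 - w w^T / (1 + v_0), w = e_0 + v, is real, symmetric, orthogonal,
   continuous in y, and has first column -v(y).  Conjugating diag(f(lam_l y)) - f(x0) by
   a(y) therefore gives a matrix whose first row and first column both have squared
   l^2-norm sum_l v_l^2 |f(lam_l y) - f(x0)|^2 < eps^2.  Taking for b(y) the lower-right
   corner of the conjugate, the difference to be estimated vanishes outside the first row
   and column, so its Hilbert-Schmidt norm, which bounds its operator norm, is below
   sqrt 2 eps < 2 eps. *)

Lemma sumr_delta (R : pzSemiRingType) n (F : 'I_n -> R) i :
  \sum_l (i == l)%:R * F l = F i.
Proof.
rewrite (bigD1 i) //= eqxx mul1r big1 ?addr0 // => l /negPf.
by rewrite eq_sym => ->; rewrite mul0r.
Qed.

Lemma weighted_mean_lt (R : realFieldType) n (w x : 'I_n -> R) r :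
  (forall i, 0 <= w i) -> \sum_i w i = 1 -> (forall i, w i != 0 -> x i < r) ->
  \sum_i w i * x i < r.
Proof.
move=> w_ge0 w_sum1 x_lt.
have drop0 F : \sum_i w i * F i = \sum_(i | w i != 0) w i * F i.
  rewrite (bigID (fun i => w i != 0)) /= [X in _ + X]big1 ?addr0 // => i /negPn/eqP ->.
  by rewrite mul0r.
have [i0 wi0] : exists i, w i != 0.
  apply/existsP; apply: contraT; rewrite negb_exists => /forallP w0.
  move: w_sum1; rewrite big1 => [/esym/eqP|i _]; first by rewrite oner_eq0.
  exact/eqP/negPn/(w0 i).
rewrite -[r]mul1r -w_sum1 mulr_suml (drop0 x) (drop0 (fun=> r)).
apply: ltr_sum; first by apply/hasP; exists i0; rewrite ?mem_index_enum.
by move=> i wi; rewrite ltr_pM2l ?x_lt // lt_def wi w_ge0.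
Qed.

Lemma CauchySchwarz_sum (R : realFieldType) n (a b : 'I_n -> R) :
  (\sum_i a i * b i) ^+ 2 <= (\sum_i a i ^+ 2) * (\sum_i b i ^+ 2).
Proof.
set A := \sum_i a i ^+ 2; set B := \sum_i b i ^+ 2.
have AB : A * B = \sum_i \sum_j a i ^+ 2 * b j ^+ 2 by rewrite big_distrlr.
have BA : A * B = \sum_i \sum_j a j ^+ 2 * b i ^+ 2.
  rewrite mulrC big_distrlr; apply: eq_bigr => i _.
  by apply: eq_bigr => j _; rewrite mulrC.
have AB2 : (\sum_i a i * b i) ^+ 2 = \sum_i \sum_j (a i * b i) * (a j * b j).
  by rewrite expr2 big_distrlr.
have lagrange : \sum_i \sum_j (a i * b j - a j * b i) ^+ 2 =
    A * B + A * B - 2 * (\sum_i a i * b i) ^+ 2.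
  rewrite {1}AB BA AB2 mulr_sumr -!big_split -sumrN -big_split /=.
  apply: eq_bigr => i _; rewrite mulr_sumr -!big_split -sumrN -big_split /=.
  by apply: eq_bigr => j _; ring.
have : 0 <= \sum_i \sum_j (a i * b j - a j * b i) ^+ 2.
  by apply: sumr_ge0 => i _; apply: sumr_ge0 => j _; exact: sqr_ge0.
rewrite lagrange; lra.
Qed.

Lemma continuous_sumr (T : topologicalType) (K : numFieldType) n
    (F : 'I_n -> T -> K) :
  (forall i, continuous (F i)) -> continuous (fun y => \sum_i F i y).
Proof.
move=> F_cont; apply: continuous_big; first exact: add_continuous.
by move=> i _; exact: F_cont.
Qed.

Lemma mdist_continuous (R : realType) (X : metricType R) (T : topologicalType)
    (x0 : X) (h : T -> X) :
  continuous h -> continuous (fun t => mdist (h t) x0).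
Proof.
move=> h_cont t; apply/cvgrPdist_lt => e e_gt0.
have /(metricType_numDomainType.cvgrPdist_lt h (h t)) h_near := h_cont t.
apply: filterS (h_near e e_gt0) => s h_ts.
have := metric_triangle (h t) (h s) x0; have := metric_triangle (h s) (h t) x0.
rewrite (metric_sym (h s) (h t)) ltr_norml; move: h_ts; lra.
Qed.

Section Householder.
Variables (F : fieldType) (n : nat) (v : 'I_n.+1 -> F).

Local Notation w i := ((i == ord0)%:R + v i).

Definition householder : 'M[F]_n.+1 :=
  \matrix_(i, j) ((i == j)%:R - w i * w j / (1 + v ord0)).

Lemma householder_sym : householder^T = householder.
Proof. by apply/matrixP => i j; rewrite !mxE eq_sym [w j * _]mulrC. Qed.

Hypothesis v0_neq : 1 + v ord0 != 0.

Lemma householder_col0 i : householder i ord0 = - v i.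
Proof.
rewrite mxE eqxx -mulrA mulfV // mulr1.
by rewrite opprD addrA subrr add0r.
Qed.

Hypothesis v_unit : \sum_i v i ^+ 2 = 1.

Lemma householder_orth : householder *m householder = 1%:M.
Proof.
have sum_w2 : \sum_l w l ^+ 2 = 2 * (1 + v ord0).
  under eq_bigr do rewrite sqrrD.
  rewrite !big_split /= v_unit (bigD1 ord0) //= big1 => [|l /negPf -> ]; last first.
    by rewrite expr0n.
  under eq_bigr do rewrite eq_sym.
  by rewrite sumr_delta; ring.
apply/matrixP => i j; rewrite !mxE.
under eq_bigr do rewrite !mxE.
transitivity (\sum_l ((i == l)%:R * (l == j)%:R
   - (i == l)%:R * (w l * w j / (1 + v ord0))
   - (l == j)%:R * (w i * w l / (1 + v ord0))
   + (w i * w j / (1 + v ord0) ^+ 2) * w l ^+ 2)).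
  by apply: eq_bigr => l _; field.
rewrite !big_split /= !sumrN !sumr_delta -mulr_sumr sum_w2.
under [X in _ - X]eq_bigr do rewrite eq_sym.
by rewrite sumr_delta; field.
Qed.

End Householder.

Lemma householder_continuous (R : realType) (T : topologicalType) n
    (v : 'I_n.+1 -> T -> R) i j :
  (forall l, continuous (v l)) -> (forall y, 1 + v ord0 y != 0) ->
  continuous (fun y => householder (v^~ y) i j).
Proof.
move=> v_cont v0_neq.
have w_cont l : continuous (fun y => (l == ord0)%:R + v l y).
  by move=> y; apply: cvgD; [exact: cvg_cst | exact: v_cont].
move=> y; rewrite /householder; under [fun _ => _]funext do rewrite mxE.
apply: cvgB; first exact: cvg_cst.
apply: cvgM; first by apply: cvgM; exact: w_cont.
by apply: cvgV; [exact: v0_neq | exact: (w_cont ord0)].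
Qed.

Section UnitWeights.
Variables (R : realType) (T : topologicalType) (n : nat).
Variables (d : 'I_n.+1 -> T -> R) (eta : R).
Hypotheses (d_cont : forall i, continuous (d i)) (eta_gt0 : 0 < eta).

Let bump i y := Num.max 0 (2 * eta - d i y).

(* The correction at [ord0] keeps the weights away from 0 everywhere and
   vanishes as soon as some [d i y < eta]. *)
Let weight i y :=
  bump i y + (i == ord0)%:R * Num.max 0 (eta - \sum_l bump l y).

Let weight_norm y := Num.sqrt (\sum_i weight i y ^+ 2).

Let bump_ge0 i y : 0 <= bump i y.
Proof. by rewrite le_max lexx. Qed.

Let weight_ge0 i y : 0 <= weight i y.
Proof. by rewrite addr_ge0 ?bump_ge0 ?mulr_ge0 ?ler0n ?le_max ?lexx. Qed.

Let eta_le_sum_weight y : eta <= \sum_i weight i y.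
Proof.
rewrite big_split /=; under [X in _ + X]eq_bigr do rewrite eq_sym.
rewrite sumr_delta.
have : eta - \sum_l bump l y <= Num.max 0 (eta - \sum_l bump l y).
  by rewrite le_max lexx orbT.
lra.
Qed.

Let weight_norm_gt0 y : 0 < weight_norm y.
Proof.
rewrite sqrtr_gt0 lt_def sumr_ge0 ?andbT => [|i _]; last exact: sqr_ge0.
apply/negP => /eqP /psumr_eq0P weight0.
have := eta_le_sum_weight y; rewrite big1 => [|i _]; first by rewrite leNgt eta_gt0.
by apply/eqP; rewrite -sqrf_eq0 weight0 // => l _; exact: sqr_ge0.
Qed.

Let bump_cont i : continuous (bump i).
Proof.
move=> y; apply: (@continuous_max R T (fun=> 0) (fun y => 2 * eta - d i y)).
  exact: cvg_cst.
by apply: cvgB; [exact: cvg_cst | exact: d_cont].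
Qed.

Let weight_cont i : continuous (weight i).
Proof.
move=> y; apply: cvgD; first exact: bump_cont.
apply: cvgM; first exact: cvg_cst.
apply: (@continuous_max R T (fun=> 0) (fun y => eta - \sum_l bump l y)).
  exact: cvg_cst.
apply: cvgB; first exact: cvg_cst.
by apply: continuous_sumr => l; exact: bump_cont.
Qed.

Let weight_norm_cont : continuous weight_norm.
Proof.
move=> y; apply: (continuous_comp (g := Num.sqrt)); last exact: sqrt_continuous.
by apply: continuous_sumr => i z; apply: cvgM; exact: weight_cont.
Qed.

Let weight_supp y : (exists i, d i y < eta) ->
  forall i, weight i y != 0 -> d i y < 2 * eta.
Proof.
move=> [i0 d_i0] i; rewrite /weight.
have bump_i0 : 2 * eta - d i0 y <= \sum_l bump l y.
  rewrite (bigD1 i0) //= -[X in X <= _]addr0 lerD ?le_max ?lexx ?orbT //.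
  by apply: sumr_ge0 => l _; exact: bump_ge0.
have -> : Num.max 0 (eta - \sum_l bump l y) = 0 by apply/max_idPl; lra.
rewrite mulr0 addr0 /bump => /eqP bump_i; apply: contra_notT bump_i.
by rewrite -leNgt => le_d; apply/max_idPl; lra.
Qed.

Lemma exists_unit_weights : exists v : 'I_n.+1 -> T -> R,
  [/\ forall i, continuous (v i), forall i y, 0 <= v i y,
      forall y, \sum_i v i y ^+ 2 = 1
    & forall y, (exists i, d i y < eta) ->
        forall i, v i y != 0 -> d i y < 2 * eta].
Proof.
exists (fun i y => weight i y / weight_norm y); split.
- move=> i y; apply: cvgM; first exact: weight_cont.
  by apply: cvgV; [rewrite gt_eqF ?weight_norm_gt0 | exact: weight_norm_cont].
- by move=> i y; rewrite divr_ge0 ?weight_ge0 ?ltW ?weight_norm_gt0.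
- move=> y; under eq_bigr do rewrite expr_div_n.
  rewrite -mulr_suml sqr_sqrtr ?divff ?sumr_ge0 // => [|i _]; last exact: sqr_ge0.
  by have := weight_norm_gt0 y; rewrite sqrtr_gt0 lt0r => /andP[].
- move=> y /weight_supp supp i; rewrite mulf_eq0 negb_or => /andP[+ _].
  exact: supp.
Qed.

End UnitWeights.

Lemma sub_corner_cross (K : pzRingType) p (M : 'M[K]_p.+1) (c : K) i j :
  ((M : 'M[K]_(1 + p)) - block_mx c%:M 0 0 (drsubmx (M : 'M[K]_(1 + p)))) i j =
  if (i == ord0) || (j == ord0) then (M - c%:M) i j else 0.
Proof.
rewrite [LHS]mxE [X in _ + X]mxE.
case: (split_ordP (i : 'I_(1 + p))) => i' ->;
  case: (split_ordP (j : 'I_(1 + p))) => j' ->;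
  rewrite ?block_mxEul ?block_mxEur ?block_mxEdl ?block_mxEdr !mxE ?ord1 -!val_eqE /=.
all: by rewrite ?mulr0n ?subrr.
Qed.

Lemma conj_diag_sub_scalar (K : comPzRingType) n (A : 'M[K]_n) (e : 'rV[K]_n) c :
  A *m A = 1%:M ->
  A *m diag_mx e *m A - c%:M = A *m diag_mx (\row_l (e 0 l - c)) *m A.
Proof.
move=> AA; have -> : diag_mx (\row_l (e 0 l - c)) = diag_mx e - c%:M.
  by apply/matrixP => i j; rewrite !mxE mulrnBl.
by rewrite mulmxBr mulmxBl mul_mx_scalar -scalemxAl AA scalemx1.
Qed.

Lemma block_conj_diag_sub (K : pzRingType) m k (A D1 B : 'M[K]_m) (D2 : 'M[K]_k) :
  block_mx A 0 0 1%:M *m block_mx D1 0 0 D2 *m block_mx A 0 0 1%:M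
    - block_mx B 0 0 D2 = block_mx (A *m D1 *m A - B) 0 0 0.
Proof.
rewrite !mulmx_block !mulmx0 !mul0mx !addr0 !add0r !mul1mx !mulmx1.
by rewrite opp_block_mx add_block_mx !oppr0 !addr0 subrr mul0mx.
Qed.

Section ComplexNorms.
Variable R : realType.
Local Notation C := (Cplx R).

Lemma cmodE (z : C) : (cmod z)%:C = `|z|.
Proof. by case: z => a b; rewrite normc_def. Qed.

Lemma cmod_ge0 (z : C) : 0 <= cmod z.
Proof. by rewrite -(@ler0c R) cmodE. Qed.

Lemma cmod0 : cmod (0 : C) = 0.
Proof. by apply: (@complexI R); rewrite cmodE normr0. Qed.

Lemma cmodM (z w : C) : cmod (z * w) = cmod z * cmod w.
Proof. by apply: (@complexI R); rewrite rmorphM !cmodE normrM. Qed.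

Lemma cmod_real (a : R) : cmod (a%:C : C) = `|a|.
Proof.
by apply: (@complexI R); rewrite cmodE normc_def /= expr0n /= addr0 sqrtr_sqr.
Qed.

Lemma cmod_sum_le n (z : 'I_n -> C) : cmod (\sum_i z i) <= \sum_i cmod (z i).
Proof. by rewrite -lecR cmodE rmorph_sum; exact: ler_norm_sum. Qed.

Lemma cmod_sqrE (z : C) : (cmod z ^+ 2)%:C = z * Num.conj z.
Proof. by rewrite rmorphXn /= cmodE normCK. Qed.

Lemma conj_real (a : R) : Num.conj (a%:C : C) = a%:C.
Proof. by apply: conj_Creal; apply/complex_realP; exists a. Qed.

Lemma CauchySchwarz_cmod n (z u : 'I_n -> C) :
  cmod (\sum_i z i * u i) ^+ 2
    <= (\sum_i cmod (z i) ^+ 2) * (\sum_i cmod (u i) ^+ 2).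
Proof.
apply: le_trans (CauchySchwarz_sum (fun i => cmod (z i)) (fun i => cmod (u i))).
rewrite ler_sqr ?nnegrE ?cmod_ge0 ?sumr_ge0 // => [|i _]; last first.
  by rewrite mulr_ge0 ?cmod_ge0.
by under [X in _ <= X]eq_bigr do rewrite -cmodM; exact: cmod_sum_le.
Qed.

Lemma sum_cmod_orthonormal n (H : 'M[R]_n) (z : 'I_n -> C) :
  (forall l l', \sum_j H l j * H l' j = (l == l')%:R) ->
  \sum_j cmod (\sum_l z l * (H l j)%:C) ^+ 2 = \sum_l cmod (z l) ^+ 2.
Proof.
move=> H_orth; apply: (@complexI R); rewrite !rmorph_sum /=.
under eq_bigr do rewrite cmod_sqrE rmorph_sum /= mulr_suml.
under [RHS]eq_bigr do rewrite cmod_sqrE.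
transitivity (\sum_j \sum_l \sum_l' z l * Num.conj (z l') * (H l j * H l' j)%:C).
  apply: eq_bigr => j _; apply: eq_bigr => l _; rewrite mulr_sumr.
  by apply: eq_bigr => l' _; rewrite rmorphM /= conj_real !rmorphM /=; ring.
rewrite exchange_big; apply: eq_bigr => l _; rewrite exchange_big.
transitivity (\sum_l' (l == l')%:R * (z l * Num.conj (z l'))).
  apply: eq_bigr => l' _; rewrite -mulr_sumr -rmorph_sum /= H_orth.
  by rewrite (rmorph_nat (real_complex R)) mulrC.
by rewrite sumr_delta.
Qed.

Definition frobenius2 n (A : 'M[C]_n) := \sum_i \sum_j cmod (A i j) ^+ 2.

Lemma cvec_norm0 n : cvec_norm (0 : 'cV[C]_n) = 0.
Proof. by rewrite /cvec_norm big1 ?sqrtr0 // => i _; rewrite mxE cmod0 expr0n. Qed.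

Lemma cvec_norm_mulmx_le n (A : 'M[C]_n) (u : 'cV[C]_n) :
  cvec_norm (A *m u) <= Num.sqrt (frobenius2 A) * cvec_norm u.
Proof.
have sqr_sum_ge0 m (z : 'I_m -> C) : 0 <= \sum_i cmod (z i) ^+ 2.
  by apply: sumr_ge0 => i _; exact: sqr_ge0.
rewrite /cvec_norm -sqrtrM ?sumr_ge0 // ler_wsqrtr // /frobenius2 mulr_suml.
apply: ler_sum => i _; rewrite mxE; exact: CauchySchwarz_cmod.
Qed.

Lemma cmx_opnorm_le_frobenius n (A : 'M[C]_n) :
  cmx_opnorm A <= Num.sqrt (frobenius2 A).
Proof.
apply: ge_sup; first by exists (cvec_norm (A *m 0)); exists 0; rewrite //= cvec_norm0.
move=> _ [u u_le1 <-]; apply: le_trans (cvec_norm_mulmx_le A u) _.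
by rewrite ler_piMr ?sqrtr_ge0.
Qed.

Lemma frobenius2_block0 m k (A : 'M[C]_m) :
  frobenius2 (block_mx A 0 0 0 : 'M[C]_(m + k)) = frobenius2 A.
Proof.
rewrite /frobenius2 big_split_ord /= [X in _ + X]big1 ?addr0 => [|i _]; last first.
  rewrite big_split_ord /= !big1 ?addr0 // => j _;
    by rewrite ?block_mxEdl ?block_mxEdr mxE cmod0 expr0n.
apply: eq_bigr => i _; rewrite big_split_ord /= [X in _ + X]big1 ?addr0 => [|j _].
  by apply: eq_bigr => j _; rewrite block_mxEul.
by rewrite block_mxEur mxE cmod0 expr0n.
Qed.

Lemma frobenius2_sub_corner_le n (M : 'M[C]_n.+1) c :
  frobenius2 ((M : 'M[C]_(1 + n)) - block_mx c%:M 0 0 (drsubmx (M : 'M[C]_(1 + n))))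
    <= \sum_j cmod ((M - c%:M) ord0 j) ^+ 2 + \sum_i cmod ((M - c%:M) i ord0) ^+ 2.
Proof.
rewrite /frobenius2 (bigD1 ord0) //= lerD //.
  by apply: ler_sum => j _; rewrite sub_corner_cross eqxx.
apply: (@le_trans _ _ (\sum_(i | i != ord0) cmod ((M - c%:M) i ord0) ^+ 2)).
  apply: ler_sum => i i_neq0; rewrite (bigD1 ord0) //= big1 ?addr0.
    by rewrite sub_corner_cross eqxx orbT.
  move=> j j_neq0.
  by rewrite sub_corner_cross (negPf i_neq0) (negPf j_neq0) cmod0 expr0n.
by rewrite [X in _ <= X](bigD1 ord0) //= lerDr sqr_ge0.
Qed.

Lemma cmx_opnorm_sub_corner_lt n k (M : 'M[C]_n.+1) c (eps : R) : 0 < eps ->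
  \sum_j cmod ((M - c%:M) ord0 j) ^+ 2 < eps ^+ 2 ->
  \sum_i cmod ((M - c%:M) i ord0) ^+ 2 < eps ^+ 2 ->
  cmx_opnorm (block_mx ((M : 'M[C]_(1 + n))
                           - block_mx c%:M 0 0 (drsubmx (M : 'M[C]_(1 + n)))) 0 0 0
                : 'M[C]_(1 + n + k)) < 2 * eps.
Proof.
move=> eps_gt0 row_lt col_lt.
apply: le_lt_trans (cmx_opnorm_le_frobenius _) _; rewrite frobenius2_block0.
rewrite -[2 * eps]ger0_norm ?mulr_ge0 ?ltW // -sqrtr_sqr.
rewrite ltr_sqrt ?exprn_gt0 ?mulr_gt0 //.
apply: le_lt_trans (frobenius2_sub_corner_le _ _) _; nra.
Qed.

End ComplexNorms.

Lemma continuous_real_complex (R : realType) (T : topologicalType) (r : T -> R) :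
  continuous r -> continuous (fun t => (r t)%:C : Cplx R).
Proof.
move=> r_cont t; apply/cvgrPdist_lt => e; rewrite ltcE => /andP[/eqP Im_e Re_e].
have -> : e = (complex.Re e)%:C by case: e Im_e {Re_e} => a b /= ->.
have /cvgrPdist_lt/(_ _ Re_e) := r_cont t; apply: filterS => s.
by rewrite -rmorphB /= -cmodE cmod_real ltcR.
Qed.

Lemma ctrmx_real (R : realType) n (S : 'M[R]_n) :
  ctrmx (map_mx (real_complex R) S : 'M[Cplx R]_n) = map_mx (real_complex R) S^T.
Proof. by apply/matrixP => i j; rewrite !mxE conj_real. Qed.

Section RealSymmetricOrthogonal.
Variables (R : realType) (n : nat) (H : 'M[R]_n).
Hypotheses (H_sym : H^T = H) (H_orth : H *m H = 1%:M).
Local Notation A := (map_mx (real_complex R) H : 'M[Cplx R]_n).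

Lemma ctrmx_block_real k :
  ctrmx (block_mx A 0 0 1%:M : 'M[Cplx R]_(n + k)) = block_mx A 0 0 1%:M.
Proof.
have -> : block_mx A 0 0 1%:M
    = map_mx (real_complex R) (block_mx H 0 0 1%:M : 'M[R]_(n + k)).
  by rewrite map_block_mx !map_mx0 map_mx1.
by rewrite ctrmx_real tr_block_mx H_sym !trmx0 trmx1.
Qed.

Lemma unitary_block_real k :
  unitary_cmx (block_mx A 0 0 1%:M : 'M[Cplx R]_(n + k)).
Proof.
rewrite /unitary_cmx ctrmx_block_real mulmx_block !mulmx0 !mul0mx !addr0 add0r.
by rewrite mulmx1 -map_mxM H_orth map_mx1 -scalar_mx_block.
Qed.

Lemma sum_cmod_conj_diag (e : 'rV[Cplx R]_n) i :
  \sum_j cmod ((A *m diag_mx e *m A) i j) ^+ 2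
    = \sum_l H i l ^+ 2 * cmod (e 0 l) ^+ 2.
Proof.
have H_rows l l' : \sum_j H l j * H l' j = (l == l')%:R.
  have /matrixP/(_ l l') := H_orth; rewrite !mxE => <-.
  by apply: eq_bigr => j _; have /matrixP/(_ l' j) := H_sym; rewrite mxE => ->.
transitivity (\sum_j cmod (\sum_l (H i l)%:C * e 0 l * (H l j)%:C) ^+ 2).
  apply: eq_bigr => j _; rewrite mul_mx_diag mxE.
  by under eq_bigr do rewrite !mxE.
rewrite sum_cmod_orthonormal //.
by apply: eq_bigr => l _; rewrite cmodM cmod_real exprMn real_normK ?num_real.
Qed.

Lemma conj_diag_sym (e : 'rV[Cplx R]_n) : (A *m diag_mx e *m A)^T = A *m diag_mx e *m A.
Proof. by rewrite !trmx_mul tr_diag_mx map_trmx H_sym mulmxA. Qed.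

Lemma sum_cmod_conj_diag_col (e : 'rV[Cplx R]_n) j :
  \sum_i cmod ((A *m diag_mx e *m A) i j) ^+ 2
    = \sum_l H j l ^+ 2 * cmod (e 0 l) ^+ 2.
Proof.
rewrite -sum_cmod_conj_diag; apply: eq_bigr => i _.
by rewrite -[in LHS]conj_diag_sym mxE.
Qed.

End RealSymmetricOrthogonal.

Lemma diag_starhom_block (R : realType) (X Y : Type) m k
    (lam : 'I_(m + k) -> Y -> X) (f : X -> Cplx R) y :
  diag_starhom lam f y = block_mx (diag_mx (\row_i f (lam (lshift k i) y))) 0 0
                                  (diag_mx (\row_j f (lam (rshift m j) y))).
Proof.
rewrite /diag_starhom -diag_mx_row; congr diag_mx; apply/matrixP => i j.
by case: (split_ordP j) => l ->; rewrite ?row_mxEl ?row_mxEr !mxE.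
Qed.

Lemma conj_diag_continuous (R : realType) (T : topologicalType) n
    (a : T -> 'M[Cplx R]_n) (e : T -> 'rV[Cplx R]_n) i j :
  (forall i j, continuous (fun y => a y i j)) ->
  (forall l, continuous (fun y => e y 0 l)) ->
  continuous (fun y => (a y *m diag_mx (e y) *m a y) i j).
Proof.
move=> a_cont e_cont.
have -> : (fun y => (a y *m diag_mx (e y) *m a y) i j)
    = fun y => \sum_l a y i l * e y 0 l * a y l j.
  by apply/funext => y; rewrite mul_mx_diag mxE; apply: eq_bigr => l _; rewrite mxE.
apply: continuous_sumr => l y.
by apply: cvgM; [apply: cvgM|]; [exact: a_cont | exact: e_cont | exact: a_cont].
Qed.

(* Paper's m is p.+1 (so m >= 1), paper's n is p.+1 + k (so m <= n). *)
Theorem theorem3p1 (R : realType) (X Y : metricType R)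
  (cX : compact [set: X]) (cY : compact [set: Y])
  (p k : nat) (lam : 'I_(p.+1 + k) -> Y -> X)
  (lam_cont : forall i, continuous (lam i))
  (x0 : X) (f : X -> Cplx R) (f_cont : continuous f)
  (eps : R) (eps_gt0 : 0 < eps) (eta : R) (eta_gt0 : 0 < eta)
  (f_eta : forall x y : X, mdist x y < 2 * eta -> cmod (f x - f y) < eps)
  (F : 'I_p.+1 -> set Y)
  (F_closed : forall i, closed (F i)) (F_nonempty : forall i, F i !=set0)
  (F_lam : forall (i : 'I_p.+1) (y : Y), F i y -> mdist (lam (lshift k i) y) x0 < eta) :
  exists (a : Y -> 'M[Cplx R]_p.+1) (b : Y -> 'M[Cplx R]_p),
    (forall i j, continuous (fun y => a y i j)) /\
    (forall i j, continuous (fun y => b y i j)) /\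
    (forall y, unitary_cmx (block_mx (a y) 0 0 1%:M : 'M[Cplx R]_(p.+1 + k))) /\
    (forall y, (exists i, F i y) ->
       cmx_opnorm ((block_mx (a y) 0 0 1%:M : 'M[Cplx R]_(p.+1 + k))
                 *m diag_starhom lam f y
                 *m ctrmx (block_mx (a y) 0 0 1%:M : 'M[Cplx R]_(p.+1 + k))
               - (block_mx (block_mx (f x0)%:M 0 0 (b y)) 0 0
                    (diag_mx (\row_j f (lam (rshift p.+1 j) y)))
                  : 'M[Cplx R]_(1 + p + k)))
       < 2 * eps).
Proof.
have [v [v_cont v_ge0 v_unit v_supp]] := exists_unit_weights
  (fun i : 'I_p.+1 => mdist_continuous (x0 := x0) (lam_cont (lshift k i))) eta_gt0.
have v0_neq y : 1 + v ord0 y != 0 by rewrite gt_eqF // ltr_wpDr ?v_ge0.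
pose H y := householder (v^~ y).
have H_sym y : (H y)^T = H y := householder_sym _.
have H_orth y : H y *m H y = 1%:M := householder_orth (v0_neq y) (v_unit y).
pose a y : 'M[Cplx R]_p.+1 := map_mx (real_complex R) (H y).
pose d y : 'rV[Cplx R]_p.+1 := \row_i f (lam (lshift k i) y).
have a_cont i j : continuous (fun y => a y i j).
  under [fun _ => _]funext do rewrite mxE.
  exact/continuous_real_complex/householder_continuous.
exists a, (fun y => drsubmx (a y *m diag_mx (d y) *m a y : 'M[Cplx R]_(1 + p))).
split; [exact: a_cont | split; [|split]].
- move=> i j; under [fun _ => _]funext do rewrite mxE [dsubmx _ _ _]mxE.
  apply: conj_diag_continuous => // l y; rewrite /d.
  under [fun _ => _]funext do rewrite mxE.
  exact: continuous_comp (lam_cont _ _) (f_cont _).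
- by move=> y; exact: unitary_block_real.
- move=> y [i0 /F_lam near_x0].
  have AA : a y *m a y = 1%:M by rewrite -map_mxM H_orth map_mx1.
  have H_row0 l : H y ord0 l ^+ 2 = v l y ^+ 2.
    by rewrite -[H y]H_sym mxE householder_col0 ?sqrrN.
  have err_lt : \sum_l H y ord0 l ^+ 2 * cmod (d y 0 l - f x0) ^+ 2 < eps ^+ 2.
    apply: weighted_mean_lt => [l | | l]; first exact: sqr_ge0.
      by under eq_bigr do rewrite H_row0; exact: v_unit.
    rewrite H_row0 sqrf_eq0 => /(v_supp y (ex_intro _ i0 near_x0)) near2.
    by rewrite mxE ltrXn2r ?cmod_ge0 //; exact: f_eta.
  rewrite ctrmx_block_real // diag_starhom_block block_conj_diag_sub.
  apply: cmx_opnorm_sub_corner_lt => //; rewrite conj_diag_sub_scalar //.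
    by rewrite sum_cmod_conj_diag //; under eq_bigr do rewrite [in cmod _]mxE.
  by rewrite sum_cmod_conj_diag_col //; under eq_bigr do rewrite [in cmod _]mxE.
Qed.
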